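(* Let $V(x)=x(1+xU(x))$, where $U$ is absolutely monotonic on some interval $(0,R)$ (i.e. $U$ has a power series expansion $U(x)=a_1+a_2x+a_3x^2+\dots$ with non-negative coefficients there). Define $s(z)=\exp\left(\int\frac{dz}{V(z)}\right)$ and $b(z)=\exp\left(\int\frac{z\,dz}{V(z)}\right)$ (with arbitrary fixed antiderivatives). Then $V$ is the covariance of the power series distribution of the function $\omega(y)=b(s^{-1}(y))$.
   Context: For a power series $\omega(y)=\sum_k a_ky^k$ with non-negative coefficients and positive radius of convergence, the power series distribution (PSD) of $\omega$ with parameter $y>0$ is the law on $\{0,1,2,\dots\}$ given by $P\{\xi=k\}=a_ky^k/\omega(y)$. Its mean is $x(y)=y\omega'(y)/\omega(y)$ and its variance is $y\,x'(y)>0$, so $x(\cdot)$ has an inverse $y=f(x)$ on its range. The covariance of the PSD of $\omega$ is the function $V(x)=f(x)/f'(x)$, i.e. the variance expressed as a function of the mean $x$. Here $s^{-1}$ denotes the inverse function of $s$. *)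

From Stdlib Require Import Reals.
From Coquelicot Require Import Coquelicot.
Open Scope R_scope.

Definition psd_mean (c : nat -> R) (y : R) : R :=
  y * Derive (PSeries c) y / PSeries c y.

Definition psd_covariance (c : nat -> R) (rho : R) (Vf : R -> R) : Prop :=
  forall f : R -> R,
    (forall y, 0 < y < rho -> f (psd_mean c y) = y) ->
    forall y, 0 < y < rho ->
      ex_derive f (psd_mean c y) /\
      Vf (psd_mean c y) = f (psd_mean c y) / Derive f (psd_mean c y).

From Stdlib Require Import Reals Lra Lia.
From Coquelicot Require Import Coquelicot.
Open Scope R_scope.

(* Let [P] be the power series with [P 0 = 0], [P' 0 = 1] and
   [y P'(y) = V (P y)].  Comparing coefficients determines them recursively,
   and they are nonnegative because those of [V] are.  A partial sum [P_N]
   satisfies [y P_N' <= V o P_N] coefficientwise, hence the Riccati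
   inequality [(P_N / y)' <= U r (P_N / y) ^ 2] while [P_N <= r]; this keeps
   [P_N < r] on [(0, r / (1 + r U r))], so [P] converges there.  The ODE
   gives [F o P = k + ln] and [G o P = k' + Int P(t)/t dt], so
   [s^-1 (y) = P (e^-k y)] and [omega (y) = e^k' exp (Int ...)] is a power
   series with nonnegative coefficients.  Its mean [y omega' / omega] is
   [P (e^-k y) = s^-1 (y)]; hence the inverse of the mean is [s] and the
   covariance is [s / s' = V]. *)

(** * Series with nonnegative terms *)

Lemma is_pseries_infinite_sum (a : nat -> R) (x l : R) :
  is_pseries a x l <-> infinite_sum (fun n => a n * x ^ n) l.
Proof. rewrite is_pseries_R. apply is_series_Reals. Qed.

Lemma Un_cv_le_const (u : nat -> R) (l B : R) :
  (forall n, u n <= B) -> Un_cv u l -> l <= B.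
Proof.
  intros Hu Hl. apply (Rle_cv_lim (Vn := fun _ => B) Hu Hl).
  intros eps Heps. exists 0%nat. intros. unfold R_dist. rewrite Rminus_diag, Rabs_R0. lra.
Qed.

Section NonnegativeSeries.

Variable f : nat -> R.
Hypothesis f_nonneg : forall n, 0 <= f n.

Lemma sum_f_R0_growing : Un_growing (sum_f_R0 f).
Proof. intro n. rewrite tech5. generalize (f_nonneg (S n)); lra. Qed.

Lemma sum_f_R0_le_infinite_sum (l : R) (N : nat) :
  infinite_sum f l -> sum_f_R0 f N <= l.
Proof. intro Hl. exact (growing_ineq _ _ sum_f_R0_growing Hl N). Qed.

Lemma term_le_sum_f_R0 (n : nat) : f n <= sum_f_R0 f n.
Proof.
  destruct n as [|n]; simpl; [lra|].
  generalize (cond_pos_sum f n f_nonneg); lra.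
Qed.

Lemma term_le_infinite_sum (l : R) (n : nat) : infinite_sum f l -> f n <= l.
Proof.
  intro Hl. eapply Rle_trans; [apply term_le_sum_f_R0|].
  now apply sum_f_R0_le_infinite_sum.
Qed.

Lemma infinite_sum_of_bounded (B : R) :
  (forall N, sum_f_R0 f N <= B) -> exists l, infinite_sum f l /\ l <= B.
Proof.
  intro HB.
  destruct (growing_cv (sum_f_R0 f)) as [l Hl].
  - exact sum_f_R0_growing.
  - exists B. intros x [N ->]. apply HB.
  - exists l. split; [exact Hl|].
    exact (Un_cv_le_const _ _ _ HB Hl).
Qed.

End NonnegativeSeries.

Lemma infinite_sum_le (f g : nat -> R) (lf lg : R) :
  (forall n, f n <= g n) -> infinite_sum f lf -> infinite_sum g lg -> lf <= lg.
Proof. intros Hfg. apply Rle_cv_lim. intro N. now apply sum_growing. Qed.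

Lemma sum_f_R0_eq_upto (f : nat -> R) (n m : nat) :
  (n <= m)%nat -> (forall k, (n < k <= m)%nat -> f k = 0) ->
  sum_f_R0 f m = sum_f_R0 f n.
Proof.
  induction 1 as [|m Hnm IH]; intro Hz; [reflexivity|].
  rewrite tech5, Hz by lia. rewrite IH by (intros; apply Hz; lia). ring.
Qed.

Lemma sum_f_R0_swap (u : nat -> nat -> R) (N : nat) :
  sum_f_R0 (fun n => sum_f_R0 (fun k => u k n) N) N =
  sum_f_R0 (fun k => sum_f_R0 (u k) N) N.
Proof.
  rewrite <- !sum_n_Reals.
  rewrite (sum_n_ext _ (fun n => sum_n (fun k => u k n) N))
    by (intro; now rewrite sum_n_Reals).
  rewrite (sum_n_ext (fun k => sum_f_R0 (u k) N) (fun k => sum_n (u k) N))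
    by (intro; now rewrite sum_n_Reals).
  symmetry. apply (sum_n_switch (G := R_AbelianMonoid)).
Qed.

Lemma Un_cv_sum_f_R0 (t : nat -> nat -> R) (A : nat -> R) (K : nat) :
  (forall k, Un_cv (t k) (A k)) ->
  Un_cv (fun N => sum_f_R0 (fun k => t k N) K) (sum_f_R0 A K).
Proof.
  intro H. induction K as [|K IH]; simpl; [apply H|]. now apply CV_plus.
Qed.

(* Tonelli for a nonnegative double series supported on [k <= n]: the square
   partial sums increase to a limit [L <= S], and every [sum_(k<=K) A k] is a
   limit of terms [<= L]. *)
Lemma infinite_sum_triangular (t : nat -> nat -> R) (A : nat -> R) (S : R) :
  (forall k n, 0 <= t k n) -> (forall k n, (n < k)%nat -> t k n = 0) ->
  (forall k, infinite_sum (t k) (A k)) -> infinite_sum A S ->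
  infinite_sum (fun n => sum_f_R0 (fun k => t k n) n) S.
Proof.
  intros Ht Hz HA HS.
  set (D := fun n => sum_f_R0 (fun k => t k n) n).
  assert (D_nonneg : forall n, 0 <= D n) by (intro; apply cond_pos_sum; auto).
  assert (A_nonneg : forall k, 0 <= A k).
  { intro k. apply (Rle_trans _ (sum_f_R0 (t k) 0)); [apply Ht|].
    now apply sum_f_R0_le_infinite_sum. }
  assert (Rows_nonneg : forall N k, 0 <= sum_f_R0 (t k) N)
    by (intros; apply cond_pos_sum; auto).
  assert (Hsquare : forall N, sum_f_R0 D N = sum_f_R0 (fun k => sum_f_R0 (t k) N) N).
  { intro N. rewrite <- sum_f_R0_swap. apply sum_eq. intros n Hn.
    symmetry. apply sum_f_R0_eq_upto; [lia|]. intros k Hk. apply Hz. lia. }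
  destruct (infinite_sum_of_bounded D D_nonneg S) as [L [HL HLS]].
  { intro N. rewrite Hsquare. apply (Rle_trans _ (sum_f_R0 A N)).
    - apply sum_Rle. intros. now apply sum_f_R0_le_infinite_sum.
    - now apply sum_f_R0_le_infinite_sum. }
  replace S with L; [exact HL|].
  apply Rle_antisym; [exact HLS|].
  apply (Un_cv_le_const (sum_f_R0 A)); [intro K|exact HS].
  apply (Un_cv_le_const (fun N => sum_f_R0 (fun k => sum_f_R0 (t k) (N + K)) K)).
  - intro N. apply (Rle_trans _ (sum_f_R0 D (N + K))).
    + rewrite Hsquare. apply Rge_le, growing_prop; [|lia].
      apply sum_f_R0_growing. intro; apply Rows_nonneg.
    + now apply sum_f_R0_le_infinite_sum.
  - apply (Un_cv_sum_f_R0 (fun k N => sum_f_R0 (t k) (N + K))).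
    intro k. apply CV_shift', HA.
Qed.

Lemma is_pseries_finite (a : nat -> R) (x : R) (N : nat) :
  (forall n, (N < n)%nat -> a n = 0) ->
  is_pseries a x (sum_f_R0 (fun n => a n * x ^ n) N).
Proof.
  intro H. apply is_pseries_infinite_sum. intros eps Heps. exists N. intros n Hn.
  unfold R_dist.
  rewrite (sum_f_R0_eq_upto _ N n) by (lia || (intros k Hk; rewrite H by lia; ring)).
  rewrite Rminus_diag, Rabs_R0. lra.
Qed.

Lemma is_pseries_le_coef (a b : nat -> R) (x A B : R) :
  (forall n, a n <= b n) -> 0 <= x -> is_pseries a x A -> is_pseries b x B -> A <= B.
Proof.
  intros Hab Hx HA HB. apply is_pseries_infinite_sum in HA, HB.
  eapply infinite_sum_le; [intro n|exact HA|exact HB].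
  apply Rmult_le_compat_r; [now apply pow_le|apply Hab].
Qed.

Section NonnegativeCoefficients.

Variable a : nat -> R.
Hypothesis a_nonneg : forall n, 0 <= a n.

Lemma pseries_term_nonneg (x : R) (n : nat) : 0 <= x -> 0 <= a n * x ^ n.
Proof. intro Hx. apply Rmult_le_pos; [apply a_nonneg|now apply pow_le]. Qed.

Lemma is_pseries_term_le (x l : R) (n : nat) :
  0 <= x -> is_pseries a x l -> a n * x ^ n <= l.
Proof.
  intros Hx Hl. apply is_pseries_infinite_sum in Hl.
  apply (term_le_infinite_sum (fun n => a n * x ^ n)); auto.
  intro; now apply pseries_term_nonneg.
Qed.

Lemma is_pseries_nonneg (x l : R) : 0 <= x -> is_pseries a x l -> 0 <= l.
Proof.
  intros Hx Hl. apply (Rle_trans _ (a 0%nat * x ^ 0)).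
  - now apply pseries_term_nonneg.
  - now apply is_pseries_term_le.
Qed.

Lemma is_pseries_le_arg (x y u v : R) :
  0 <= x <= y -> is_pseries a x u -> is_pseries a y v -> u <= v.
Proof.
  intros Hxy Hu Hv. apply is_pseries_infinite_sum in Hu, Hv.
  eapply infinite_sum_le; [intro n|exact Hu|exact Hv].
  apply Rmult_le_compat_l; [apply a_nonneg|apply pow_incr; lra].
Qed.

Lemma CV_radius_gt (X y : R) :
  (forall z, 0 < z < X -> ex_pseries a z) -> 0 <= y < X ->
  Rbar_lt (Rabs y) (CV_radius a).
Proof.
  intros Hex Hy. set (z := (y + X) / 2).
  apply (Rbar_lt_le_trans _ z).
  - simpl. rewrite Rabs_pos_eq; unfold z; lra.
  - destruct (Hex z) as [l Hl]; [unfold z; lra|].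
    apply (proj1 (CV_radius_bounded a)). exists l. intro n.
    assert (Hz : 0 <= z) by (unfold z; lra).
    rewrite Rabs_pos_eq by now apply pseries_term_nonneg.
    now apply is_pseries_term_le.
Qed.

Lemma is_pseries_mult_nonneg (b : nat -> R) (x la lb : R) :
  (forall n, 0 <= b n) -> 0 <= x ->
  is_pseries a x la -> is_pseries b x lb -> is_pseries (PS_mult a b) x (la * lb).
Proof.
  intros b_nonneg Hx Ha Hb. apply is_pseries_R in Ha, Hb. apply is_pseries_R.
  eapply is_series_ext; [intro n|apply (is_series_mult_pos _ _ _ _ Ha Hb)].
  - unfold PS_mult. rewrite Rmult_comm, scal_sum. apply sum_eq. intros k Hk.
    replace (x ^ n) with (x ^ k * x ^ (n - k)) by (rewrite <- pow_add; f_equal; lia). ring.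
  - intro; now apply pseries_term_nonneg.
  - intro n. apply Rmult_le_pos; [apply b_nonneg|now apply pow_le].
Qed.

End NonnegativeCoefficients.

(** * Powers and composition of power series *)

Definition PS_one (n : nat) : R := match n with O => 1 | _ => 0 end.

Lemma is_pseries_PS_one (x : R) : is_pseries PS_one x 1.
Proof.
  replace 1 with (sum_f_R0 (fun n => PS_one n * x ^ n) 0) by (simpl; ring).
  apply is_pseries_finite. intros [|n] Hn; [lia|reflexivity].
Qed.

Fixpoint PS_pow (p : nat -> R) (k : nat) : nat -> R :=
  match k with
  | O => PS_one
  | S k => PS_mult p (PS_pow p k)
  end.

(* The coefficients of [w o p] when [p 0 = 0]: the powers [p ^ k] with [k > n]
   do not contribute to the [n]-th coefficient. *)
Definition PS_comp (w p : nat -> R) (n : nat) : R :=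
  sum_f_R0 (fun k => w k * PS_pow p k n) n.

Section PowersOfSeries.

Variable p : nat -> R.

Lemma PS_pow_1 (n : nat) : PS_pow p 1 n = p n.
Proof.
  simpl. unfold PS_mult. destruct n as [|n]; [simpl; ring|].
  rewrite tech5, sum_eq_R0, Nat.sub_diag; [simpl; ring|].
  intros i Hi. replace (S n - i)%nat with (S (n - i)) by lia. simpl. ring.
Qed.

Lemma PS_pow_nonneg (k n : nat) : (forall i, 0 <= p i) -> 0 <= PS_pow p k n.
Proof.
  intro Hp. revert n. induction k as [|k IH]; intro n; simpl.
  - destruct n; simpl; lra.
  - apply cond_pos_sum. intro i. now apply Rmult_le_pos.
Qed.

Lemma PS_comp_nonneg (w : nat -> R) (n : nat) :
  (forall k, 0 <= w k) -> (forall i, 0 <= p i) -> 0 <= PS_comp w p n.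
Proof.
  intros Hw Hp. apply cond_pos_sum. intro k. apply Rmult_le_pos; [apply Hw|].
  now apply PS_pow_nonneg.
Qed.

Lemma is_pseries_PS_pow (x P : R) :
  (forall i, 0 <= p i) -> 0 <= x -> is_pseries p x P ->
  forall k, is_pseries (PS_pow p k) x (P ^ k).
Proof.
  intros Hp Hx HP k. induction k as [|k IH].
  - apply is_pseries_PS_one.
  - apply is_pseries_mult_nonneg; auto. intro; now apply PS_pow_nonneg.
Qed.

Hypothesis p_0 : p 0%nat = 0.

Lemma PS_pow_lt (k n : nat) : (n < k)%nat -> PS_pow p k n = 0.
Proof.
  revert n. induction k as [|k IH]; intros n Hn; [lia|].
  simpl. unfold PS_mult. apply sum_eq_R0. intros [|i] Hi.
  - rewrite p_0. ring.
  - rewrite IH by lia. ring.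
Qed.

End PowersOfSeries.

Lemma PS_pow_agree (p q : nat -> R) (m : nat) :
  (forall i, (i <= m)%nat -> p i = q i) ->
  forall k j, (j <= m)%nat -> PS_pow p k j = PS_pow q k j.
Proof.
  intros H k. induction k as [|k IH]; intros j Hj; [reflexivity|].
  simpl. unfold PS_mult. apply sum_eq. intros i Hi.
  rewrite H, IH by lia. reflexivity.
Qed.

Lemma PS_pow_causal (p q : nat -> R) (n k : nat) :
  p 0%nat = 0 -> q 0%nat = 0 -> (forall i, (i < n)%nat -> p i = q i) ->
  (2 <= k)%nat -> PS_pow p k n = PS_pow q k n.
Proof.
  intros Hp Hq H Hk. destruct k as [|k]; [lia|].
  simpl. unfold PS_mult. apply sum_eq. intros [|i] Hi.
  - rewrite Hp, Hq. ring.
  - destruct (Nat.eq_dec (S i) n) as [<-|Hin].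
    + rewrite Nat.sub_diag, !PS_pow_lt by (auto; lia). ring.
    + rewrite H by lia. rewrite (PS_pow_agree p q (n - 1)); [reflexivity| |lia].
      intros; apply H; lia.
Qed.

Lemma is_pseries_PS_comp (w p : nat -> R) (y P W : R) :
  (forall k, 0 <= w k) -> (forall i, 0 <= p i) -> p 0%nat = 0 -> 0 <= y ->
  is_pseries p y P -> is_pseries w P W -> is_pseries (PS_comp w p) y W.
Proof.
  intros Hw Hp Hp0 Hy HP HW. apply is_pseries_R.
  apply (is_series_ext (fun n => sum_f_R0 (fun k => w k * (PS_pow p k n * y ^ n)) n)).
  { intro n. unfold PS_comp. rewrite Rmult_comm, scal_sum. apply sum_eq. intros; ring. }
  apply is_series_Reals, infinite_sum_triangular with (A := fun k => w k * P ^ k).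
  - intros k n. apply Rmult_le_pos; [apply Hw|].
    apply Rmult_le_pos; [now apply PS_pow_nonneg|now apply pow_le].
  - intros k n Hkn. rewrite PS_pow_lt by auto. ring.
  - intro k. apply is_series_Reals.
    apply (is_series_scal (w k) _ (P ^ k)), is_pseries_R.
    now apply is_pseries_PS_pow.
  - now apply is_pseries_infinite_sum.
Qed.

(** * The coefficients of the inverse series *)

Section CausalFixpoint.

Variable T : (nat -> R) -> nat -> R.
Hypothesis T_0 : forall p, T p 0%nat = 0.
Hypothesis T_causal : forall p q n, p 0%nat = 0 -> q 0%nat = 0 ->
  (forall i, (i < n)%nat -> p i = q i) -> T p n = T q n.

Let iterate (m : nat) : nat -> R := Nat.iter m T (fun _ => 0).

Lemma iterate_0 (m : nat) : iterate m 0%nat = 0.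
Proof. destruct m; [reflexivity|apply T_0]. Qed.

Lemma iterate_stable (m i : nat) : (i < m)%nat -> iterate m i = iterate (S m) i.
Proof.
  revert i. induction m as [|m IH]; intros i Hi; [lia|].
  change (T (iterate m) i = T (iterate (S m)) i).
  apply T_causal; try apply iterate_0. intros j Hj. apply IH. lia.
Qed.

Lemma iterate_agree (m m' i : nat) :
  (i < m)%nat -> (m <= m')%nat -> iterate m i = iterate m' i.
Proof.
  intros Hi. induction 1 as [|m' Hm IH]; [reflexivity|].
  rewrite IH. apply iterate_stable. lia.
Qed.

(* The [n]-th iterate of [T] from [0] is already exact below [n]. *)
Definition causal_fix (n : nat) : R := iterate (S n) n.

Lemma causal_fix_eq (n : nat) : causal_fix n = T causal_fix n.
Proof.
  change (T (iterate n) n = T causal_fix n).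
  apply T_causal; [apply iterate_0|apply T_0|].
  intros i Hi. symmetry. apply iterate_agree; lia.
Qed.

Lemma causal_fix_nonneg (n : nat) :
  (forall p, (forall i, 0 <= p i) -> forall i, 0 <= T p i) -> 0 <= causal_fix n.
Proof.
  intro HT.
  assert (H : forall m i, 0 <= iterate m i).
  { intro m. induction m as [|m IH]; intro i; [unfold iterate; simpl; lra|].
    exact (HT (iterate m) IH i). }
  apply H.
Qed.

End CausalFixpoint.

Definition V_coef (a : nat -> R) (n : nat) : R :=
  match n with O => 0 | S O => 1 | S (S k) => a k end.

Lemma is_pseries_V_coef (a : nat -> R) (x u : R) :
  is_pseries a x u -> is_pseries (V_coef a) x (x * (1 + x * u)).
Proof.
  intro Hu. apply (is_pseries_incr_n _ 2) in Hu.
  assert (H1 := is_pseries_incr_1 _ _ _ (is_pseries_PS_one x)).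
  replace (x * (1 + x * u)) with (plus (scal x 1) (scal (pow_n x 2) u))
    by (rewrite pow_n_pow; change (x * 1 + x ^ 2 * u = x * (1 + x * u)); ring).
  eapply is_pseries_ext; [|apply (is_pseries_plus _ _ _ _ _ H1 Hu)].
  intros [|[|n]]; unfold PS_plus, PS_incr_1; simpl; unfold plus, zero; simpl; ring.
Qed.

(* Comparing coefficients in [y P'(y) = V(P(y))] gives
   [(n - 1) g n = sum_j a j [g ^ (j + 2)]_n] for [n >= 2]. *)
Definition inv_step (a p : nat -> R) (n : nat) : R :=
  match n with
  | O => 0
  | S O => 1
  | S (S m) => sum_f_R0 (fun j => a j * PS_pow p (S (S j)) (S (S m))) m / INR (S m)
  end.

Definition inv_coef (a : nat -> R) : nat -> R := causal_fix (inv_step a).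

Section InverseCoefficients.

Variable a : nat -> R.
Hypothesis a_nonneg : forall k, 0 <= a k.

Lemma V_coef_nonneg (n : nat) : 0 <= V_coef a n.
Proof. destruct n as [|[|k]]; simpl; auto; lra. Qed.

Lemma inv_step_causal (p q : nat -> R) (n : nat) :
  p 0%nat = 0 -> q 0%nat = 0 -> (forall i, (i < n)%nat -> p i = q i) ->
  inv_step a p n = inv_step a q n.
Proof.
  intros Hp Hq H. destruct n as [|[|m]]; try reflexivity. unfold inv_step.
  f_equal. apply sum_eq. intros j Hj. f_equal. apply PS_pow_causal; auto; lia.
Qed.

Lemma inv_step_nonneg (p : nat -> R) (n : nat) :
  (forall i, 0 <= p i) -> 0 <= inv_step a p n.
Proof.
  intro Hp. destruct n as [|[|m]]; unfold inv_step; try lra.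
  apply Rmult_le_pos.
  - apply cond_pos_sum. intro j. apply Rmult_le_pos; [apply a_nonneg|now apply PS_pow_nonneg].
  - apply Rlt_le, Rinv_0_lt_compat, lt_0_INR. lia.
Qed.

Lemma PS_comp_V_coef (p : nat -> R) (n : nat) : p 0%nat = 0 ->
  PS_comp (V_coef a) p n = p n + INR (n - 1) * inv_step a p n.
Proof.
  intro Hp. unfold PS_comp. destruct n as [|[|m]].
  - simpl. rewrite Hp. ring.
  - simpl. unfold PS_mult. simpl. ring.
  - rewrite decomp_sum by lia. simpl pred. rewrite decomp_sum by lia. simpl pred.
    rewrite PS_pow_1. replace (S (S m) - 1)%nat with (S m) by lia.
    unfold inv_step. simpl V_coef.
    set (s := sum_f_R0 _ m). field. apply not_0_INR. lia.
Qed.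

Lemma inv_coef_0 : inv_coef a 0 = 0.
Proof. reflexivity. Qed.

Lemma inv_coef_1 : inv_coef a 1 = 1.
Proof. reflexivity. Qed.

Lemma inv_coef_nonneg (n : nat) : 0 <= inv_coef a n.
Proof. apply causal_fix_nonneg. intros; now apply inv_step_nonneg. Qed.

Lemma inv_coef_fix (n : nat) : inv_coef a n = inv_step a (inv_coef a) n.
Proof. apply causal_fix_eq; [reflexivity|apply inv_step_causal]. Qed.

Lemma PS_comp_V_coef_inv_coef (p : nat -> R) (n : nat) :
  p 0%nat = 0 -> (forall i, (i <= n)%nat -> p i = inv_coef a i) ->
  PS_comp (V_coef a) p n = INR n * inv_coef a n.
Proof.
  intros Hp H. rewrite PS_comp_V_coef by exact Hp.
  rewrite (inv_step_causal p (inv_coef a)), H, <- inv_coef_fix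
    by (auto; intros; apply H; lia).
  destruct n as [|n]; [rewrite inv_coef_0; simpl; ring|].
  rewrite S_INR. replace (S n - 1)%nat with n by lia. ring.
Qed.

End InverseCoefficients.

Lemma MVT_is_derive (f df : R -> R) (a b : R) :
  a < b -> (forall t, a <= t <= b -> is_derive f t (df t)) ->
  exists c, a < c < b /\ f b - f a = df c * (b - a).
Proof.
  intros Hab Hf. destruct (MVT_cor2 f df a b Hab) as [c [Hc Hc']].
  - intros t Ht. now apply is_derive_Reals, Hf.
  - now exists c.
Qed.

Lemma is_derive_zero_const (f : R -> R) (a b x y : R) :
  (forall t, a < t < b -> is_derive f t 0) -> a < x < b -> a < y < b -> f x = f y.
Proof.
  intros Hf Hx Hy.
  assert (Hxy : forall u v, a < u < b -> a < v < b -> u < v -> f u = f v).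
  { intros u v Hu Hv Huv.
    destruct (MVT_is_derive f (fun _ => 0) u v Huv) as [c [_ Hc]];
      [intros; apply Hf; lra|lra]. }
  destruct (Rtotal_order x y) as [H|[H|H]]; [auto|now subst|symmetry; auto].
Qed.

(* Comparison for the Riccati inequality [Q' <= c Q ^ 2]: the function
   [/ Q t + c t] is nondecreasing. *)
Lemma Rinv_ge_of_derive_le_sqr (Q dQ : R -> R) (c y : R) :
  0 < y -> (forall t, 0 <= t <= y -> is_derive Q t (dQ t) /\ 0 < Q t) ->
  (forall t, 0 < t < y -> dQ t <= c * Q t ^ 2) ->
  / Q 0 - c * y <= / Q y.
Proof.
  intros Hy HQ Hric.
  destruct (MVT_is_derive (fun t => / Q t + c * t) (fun t => - dQ t / Q t ^ 2 + c) 0 y Hy)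
    as [t [Ht Hmvt]].
  - intros t Ht. destruct (HQ t Ht) as [Hd Hpos].
    apply (is_derive_plus (fun t => / Q t) (fun t => c * t)).
    + apply is_derive_inv; [exact Hd|lra].
    + auto_derive; [exact I|ring].
  - assert (Hpos : 0 < Q t) by (apply HQ; lra).
    assert (Hdt : - dQ t / Q t ^ 2 + c >= 0).
    { specialize (Hric t Ht).
      replace (- dQ t / Q t ^ 2 + c) with ((c * Q t ^ 2 - dQ t) / Q t ^ 2) by (field; lra).
      apply Rle_ge, Rdiv_le_0_compat; [lra|apply pow_lt; lra]. }
    nra.
Qed.

Definition PS_trunc (N : nat) (p : nat -> R) (n : nat) : R :=
  if (n <=? N)%nat then p n else 0.

Lemma is_pseries_PS_trunc (N : nat) (p : nat -> R) (x : R) :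
  is_pseries (PS_trunc N p) x (sum_f_R0 (fun n => p n * x ^ n) N).
Proof.
  unfold PS_trunc.
  rewrite (sum_eq _ (fun n => PS_trunc N p n * x ^ n))
    by (intros n Hn; unfold PS_trunc; now rewrite (proj2 (Nat.leb_le n N))).
  apply is_pseries_finite. intros n Hn. unfold PS_trunc.
  now rewrite (proj2 (Nat.leb_gt n N)).
Qed.

Lemma PS_trunc_nonneg (N : nat) (p : nat -> R) (n : nat) :
  (forall i, 0 <= p i) -> 0 <= PS_trunc N p n.
Proof. intro Hp. unfold PS_trunc. destruct (n <=? N)%nat; [apply Hp|lra]. Qed.

Lemma CV_radius_PS_trunc (N : nat) (p : nat -> R) (x : R) :
  (forall i, 0 <= p i) -> Rbar_lt (Rabs x) (CV_radius (PS_trunc N p)).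
Proof.
  intro Hp. rewrite <- Rabs_Rabsolu.
  apply (CV_radius_gt _ (fun n => PS_trunc_nonneg N p n Hp) (Rabs x + 1)).
  - intros z _. eexists. apply is_pseries_PS_trunc.
  - split; [apply Rabs_pos|lra].
Qed.

Lemma is_pseries_scaled_derive (p : nat -> R) (x : R) :
  Rbar_lt (Rabs x) (CV_radius p) ->
  is_pseries (fun n => INR n * p n) x (x * Derive (PSeries p) x).
Proof.
  intro Hx. apply is_pseries_derive, is_pseries_incr_1 in Hx.
  eapply is_pseries_ext; [|exact Hx].
  intros [|n]; unfold PS_incr_1, PS_derive; [simpl; unfold zero; simpl; ring|reflexivity].
Qed.

Definition exp_coef (n : nat) : R := / INR (Factorial.fact n).

Lemma exp_coef_nonneg (n : nat) : 0 <= exp_coef n.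
Proof. apply Rlt_le, Rinv_0_lt_compat, INR_fact_lt_0. Qed.

Lemma is_pseries_scal_arg (b : nat -> R) (c s y l : R) :
  is_pseries b (s * y) l -> is_pseries (fun n => c * (b n * s ^ n)) y (c * l).
Proof.
  intro H. apply is_pseries_R in H. apply is_pseries_R.
  eapply is_series_ext; [|exact (is_series_scal c _ _ H)].
  intro n. change (c * (b n * (s * y) ^ n) = c * (b n * s ^ n) * y ^ n).
  rewrite Rpow_mult_distr. ring.
Qed.

(** * Convergence of the inverse series and the distribution *)

Section Inversion.

Variables (Rad : R) (a : nat -> R) (U : R -> R).
Hypothesis a_nonneg : forall k, 0 <= a k.
Hypothesis U_pseries : forall x, 0 < x < Rad -> is_pseries a x (U x).

Let V (x : R) : R := x * (1 + x * U x).
Let g : nat -> R := inv_coef a.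

Lemma U_nonneg (x : R) : 0 < x < Rad -> 0 <= U x.
Proof. intro Hx. apply (is_pseries_nonneg a a_nonneg x); [lra|auto]. Qed.

Lemma U_le (x y : R) : 0 < x <= y -> y < Rad -> U x <= U y.
Proof.
  intros Hxy Hy. apply (is_pseries_le_arg a a_nonneg x y); [lra|apply U_pseries; lra..].
Qed.

Lemma V_pos (x : R) : 0 < x < Rad -> 0 < V x.
Proof. intro Hx. pose proof (U_nonneg x Hx). unfold V. nra. Qed.

Lemma is_pseries_V (p : nat -> R) (y P : R) :
  (forall i, 0 <= p i) -> p 0%nat = 0 -> 0 <= y -> 0 < P < Rad ->
  is_pseries p y P -> is_pseries (PS_comp (V_coef a) p) y (V P).
Proof.
  intros Hp Hp0 Hy HP HpP. apply (is_pseries_PS_comp _ _ _ P); auto.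
  - exact (V_coef_nonneg a a_nonneg).
  - now apply is_pseries_V_coef, U_pseries.
Qed.

Section PartialSums.

Variable N : nat.
Let P : R -> R := PSeries (PS_trunc N g).

Lemma PS_trunc_inv_coef_nonneg (n : nat) : 0 <= PS_trunc N g n.
Proof. apply PS_trunc_nonneg, inv_coef_nonneg, a_nonneg. Qed.

Lemma scaled_derive_partial_sum_le (t : R) :
  0 <= t -> 0 < P t < Rad -> t * Derive P t <= V (P t).
Proof.
  intros Ht HPt.
  apply (is_pseries_le_coef (fun n => INR n * PS_trunc N g n)
           (PS_comp (V_coef a) (PS_trunc N g)) t); [intro n|exact Ht| |].
  - unfold PS_trunc at 1. destruct (Nat.leb_spec n N) as [HnN|HnN].
    + rewrite PS_comp_V_coef_inv_coef; [apply Rle_refl|reflexivity|].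
      intros i Hi. unfold PS_trunc. now rewrite (proj2 (Nat.leb_le i N)) by lia.
    + rewrite Rmult_0_r.
      apply PS_comp_nonneg; [exact (V_coef_nonneg a a_nonneg)|exact PS_trunc_inv_coef_nonneg].
  - now apply is_pseries_scaled_derive, CV_radius_PS_trunc, inv_coef_nonneg.
  - apply is_pseries_V; [apply PS_trunc_inv_coef_nonneg|reflexivity|exact Ht|exact HPt|].
    apply PSeries_correct, CV_radius_inside, CV_radius_PS_trunc, inv_coef_nonneg, a_nonneg.
Qed.

(* [P t = t * Q t]: unlike [P t / t], [Q] is smooth at [0], where [Q 0 = 1]. *)
Let Q : R -> R := PSeries (PS_decr_1 (PS_trunc N g)).
Let dQ : R -> R := PSeries (PS_derive (PS_decr_1 (PS_trunc N g))).

Lemma CV_radius_Q (t : R) : Rbar_lt (Rabs t) (CV_radius (PS_decr_1 (PS_trunc N g))).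
Proof. rewrite CV_radius_decr_1. apply CV_radius_PS_trunc, inv_coef_nonneg, a_nonneg. Qed.

Lemma partial_sum_eq (t : R) : P t = sum_f_R0 (fun n => g n * t ^ n) N.
Proof. apply is_pseries_unique, is_pseries_PS_trunc. Qed.

Lemma partial_sum_eq_mult_Q (t : R) : P t = t * Q t.
Proof.
  unfold P, Q. rewrite PSeries_decr_1.
  - unfold PS_trunc. simpl. unfold g. rewrite inv_coef_0. ring.
  - apply CV_radius_inside, CV_radius_PS_trunc, inv_coef_nonneg, a_nonneg.
Qed.

Lemma Q_ge_1 (t : R) : (1 <= N)%nat -> 0 <= t -> 1 <= Q t.
Proof.
  intros HN Ht.
  replace 1 with (PS_decr_1 (PS_trunc N g) 0 * t ^ 0)
    by (unfold PS_decr_1, PS_trunc; rewrite (proj2 (Nat.leb_le 1 N)) by lia;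
        unfold g; rewrite inv_coef_1; ring).
  apply is_pseries_term_le; auto.
  - intro; apply PS_trunc_inv_coef_nonneg.
  - apply PSeries_correct, CV_radius_inside, CV_radius_Q.
Qed.

Lemma Q_riccati (r t : R) :
  0 < t -> 0 < P t <= r -> r < Rad -> dQ t <= U r * Q t ^ 2.
Proof.
  intros Ht HPt Hr.
  assert (HdP : Derive P t = Q t + t * dQ t).
  { apply is_derive_unique.
    apply (is_derive_ext (fun t => t * Q t)); [intro; now rewrite partial_sum_eq_mult_Q|].
    assert (H := is_derive_mult (fun t => t) Q t 1 (dQ t) (is_derive_id t)
                   (is_derive_PSeries _ t (CV_radius_Q t)) Rmult_comm).
    replace (Q t + t * dQ t) with (1 * Q t + t * dQ t) by ring. exact H. }
  assert (Hode := scaled_derive_partial_sum_le t ltac:(lra) ltac:(lra)).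
  assert (HU : U (P t) <= U r) by (apply U_le; lra).
  rewrite HdP in Hode. unfold V in Hode. rewrite partial_sum_eq_mult_Q in Hode, HU.
  apply (Rmult_le_reg_l (t * t)); [nra|].
  assert (t * t * Q t ^ 2 * U (t * Q t) <= t * t * Q t ^ 2 * U r)
    by (apply Rmult_le_compat_l; [nra|exact HU]).
  nra.
Qed.

Lemma partial_sum_hit_ge (r y1 : R) :
  (1 <= N)%nat -> 0 < y1 -> P y1 = r -> r < Rad -> r / (1 + r * U r) <= y1.
Proof.
  intros HN Hy1 HPy1 Hr.
  assert (HQ : forall t, 0 <= t -> 1 <= Q t) by (intros; now apply Q_ge_1).
  assert (Hr0 : 0 < r) by (rewrite <- HPy1, partial_sum_eq_mult_Q; pose proof (HQ y1); nra).
  assert (Hc : 0 <= U r) by (apply U_nonneg; lra).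
  assert (HPt : forall t, 0 < t <= y1 -> 0 < P t <= r).
  { intros t Ht. split.
    - rewrite partial_sum_eq_mult_Q. pose proof (HQ t). nra.
    - rewrite <- HPy1.
      apply (is_pseries_le_arg _ PS_trunc_inv_coef_nonneg t y1); [lra|..];
        apply PSeries_correct, CV_radius_inside, CV_radius_PS_trunc,
          inv_coef_nonneg, a_nonneg. }
  assert (HQ0 : Q 0 = 1).
  { unfold Q. rewrite PSeries_0. unfold PS_decr_1, PS_trunc.
    rewrite (proj2 (Nat.leb_le 1 N)) by lia. apply inv_coef_1. }
  assert (HQy1 : Q y1 = r / y1).
  { apply (Rmult_eq_reg_l y1); [|lra]. rewrite <- partial_sum_eq_mult_Q, HPy1. field. lra. }
  assert (Hinv : / Q 0 - U r * y1 <= / Q y1).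
  { apply (Rinv_ge_of_derive_le_sqr Q dQ); [exact Hy1| |].
    - intros t Ht. split; [apply is_derive_PSeries, CV_radius_Q|pose proof (HQ t); lra].
    - intros t Ht. apply (Q_riccati r t); [lra|apply HPt; lra|lra]. }
  rewrite HQ0, HQy1, Rinv_1, Rinv_div in Hinv.
  apply (Rmult_le_reg_r (1 + r * U r)); [nra|].
  replace (r / (1 + r * U r) * (1 + r * U r)) with r by (field; nra).
  apply (Rmult_le_compat_l r) in Hinv; [|lra].
  replace (r * (y1 / r)) with y1 in Hinv by (field; lra). nra.
Qed.

Lemma partial_sum_lt (r y : R) :
  0 < r < Rad -> 0 <= y < r / (1 + r * U r) -> P y < r.
Proof.
  intros Hr Hy.
  destruct (Nat.eq_dec N 0) as [HN|HN].
  { rewrite partial_sum_eq, HN. simpl. unfold g. rewrite inv_coef_0. lra. }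
  assert (HP0 : P 0 = 0) by (rewrite partial_sum_eq_mult_Q; ring).
  apply Rnot_le_lt. intro Hge.
  destruct (IVT_cor (fun t => P t - r) 0 y) as [y1 [Hy1 HPy1]].
  - intro t. apply continuity_pt_minus; [|apply continuity_pt_const; intros ? ?; reflexivity].
    apply PSeries_continuity, CV_radius_PS_trunc, inv_coef_nonneg, a_nonneg.
  - lra.
  - rewrite HP0. nra.
  - assert (Hy1pos : 0 < y1) by (destruct (Req_dec y1 0) as [->|]; lra).
    pose proof (partial_sum_hit_ge r y1 ltac:(lia) Hy1pos ltac:(lra) ltac:(lra)). lra.
Qed.

End PartialSums.

Variable r : R.
Hypothesis r_bounds : 0 < r < Rad.

Let rho : R := r / (1 + r * U r).
Let P : R -> R := PSeries g.

Lemma rho_pos : 0 < rho.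
Proof.
  assert (Hc : 0 <= U r) by (apply U_nonneg; lra).
  unfold rho. apply Rdiv_lt_0_compat; nra.
Qed.

Lemma is_pseries_inv_coef (y : R) :
  0 < y < rho -> is_pseries g y (P y) /\ y <= P y <= r.
Proof.
  intro Hy.
  assert (Hterm : forall n, 0 <= g n * y ^ n)
    by (intro; apply pseries_term_nonneg; [apply inv_coef_nonneg, a_nonneg|lra]).
  destruct (infinite_sum_of_bounded _ Hterm r) as [l [Hl Hlr]].
  { intro N. rewrite <- partial_sum_eq. apply Rlt_le, partial_sum_lt; auto.
    unfold rho in Hy. lra. }
  apply is_pseries_infinite_sum in Hl.
  unfold P. rewrite (is_pseries_unique _ _ _ Hl). repeat split; auto.
  replace y with (g 1%nat * y ^ 1) at 1 by (unfold g; rewrite inv_coef_1; ring).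
  apply (is_pseries_term_le g); [apply inv_coef_nonneg, a_nonneg|lra|exact Hl].
Qed.

Lemma CV_radius_inv_coef (y : R) : 0 <= y < rho -> Rbar_lt (Rabs y) (CV_radius g).
Proof.
  apply (CV_radius_gt _ (inv_coef_nonneg a a_nonneg)).
  intros z Hz. exists (P z). now apply is_pseries_inv_coef.
Qed.

Lemma inv_coef_ode (y : R) : 0 < y < rho -> y * Derive P y = V (P y).
Proof.
  intro Hy. destruct (is_pseries_inv_coef y Hy) as [HPy HPr].
  pose proof rho_pos. unfold P.
  rewrite <- (is_pseries_unique _ _ _ (is_pseries_scaled_derive g y
                (CV_radius_inv_coef y ltac:(lra)))).
  apply is_pseries_unique.
  eapply is_pseries_ext; [|apply (is_pseries_V g y (P y))]; try lra.
  - intro n. now apply PS_comp_V_coef_inv_coef.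
  - apply inv_coef_nonneg, a_nonneg.
  - apply inv_coef_0.
  - exact HPy.
Qed.

Lemma inv_series_bounds (y : R) : 0 < y < rho -> 0 < P y < Rad.
Proof.
  intro Hy. destruct (is_pseries_inv_coef y Hy) as [_ HPy]. lra.
Qed.

Lemma is_derive_inv_series (y : R) : 0 < y < rho -> is_derive P y (V (P y) / y).
Proof.
  intro Hy. pose proof rho_pos.
  replace (V (P y) / y) with (Derive P y)
    by (rewrite <- inv_coef_ode by exact Hy; field; lra).
  apply Derive_correct, ex_derive_PSeries, CV_radius_inv_coef. lra.
Qed.

Let Pint : R -> R := PSeries (PS_Int (PS_decr_1 g)).

Lemma is_derive_Pint (y : R) : 0 < y < rho -> is_derive Pint y (P y / y).
Proof.
  intro Hy. pose proof rho_pos.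
  assert (Hrad : Rbar_lt (Rabs y) (CV_radius g)) by (apply CV_radius_inv_coef; lra).
  replace (P y / y) with (PSeries (PS_derive (PS_Int (PS_decr_1 g))) y).
  - apply is_derive_PSeries. now rewrite CV_radius_Int, CV_radius_decr_1.
  - unfold P. rewrite (PSeries_decr_1 g y) by now apply CV_radius_inside.
    unfold g. rewrite inv_coef_0. field_simplify; [|lra].
    apply PSeries_ext. intro n. unfold PS_derive, PS_Int. field. apply not_0_INR. lia.
Qed.

Variables F G : R -> R.
Hypothesis F_deriv : forall z, 0 < z < Rad -> is_derive F z (1 / (z * (1 + z * U z))).
Hypothesis G_deriv : forall z, 0 < z < Rad -> is_derive G z (z / (z * (1 + z * U z))).

Definition F_inv_const : R := F (P (rho / 2)) - ln (rho / 2).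
Definition G_inv_const : R := G (P (rho / 2)) - Pint (rho / 2).

Lemma F_inv_series (y : R) : 0 < y < rho -> F (P y) = F_inv_const + ln y.
Proof.
  intro Hy. pose proof rho_pos. unfold F_inv_const.
  enough (F (P y) - ln y = F (P (rho / 2)) - ln (rho / 2)) by lra.
  apply (is_derive_zero_const (fun t => F (P t) - ln t) 0 rho); try lra.
  intros t Ht. pose proof (V_pos (P t) (inv_series_bounds t Ht)).
  replace 0 with (V (P t) / t * (1 / V (P t)) - / t) by (field; lra).
  apply (is_derive_minus (fun t => F (P t)) ln).
  - apply (is_derive_comp F P); [apply F_deriv, inv_series_bounds, Ht|].
    now apply is_derive_inv_series.
  - apply is_derive_ln. lra.
Qed.

Lemma G_inv_series (y : R) : 0 < y < rho -> G (P y) = G_inv_const + Pint y.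
Proof.
  intro Hy. pose proof rho_pos. unfold G_inv_const.
  enough (G (P y) - Pint y = G (P (rho / 2)) - Pint (rho / 2)) by lra.
  apply (is_derive_zero_const (fun t => G (P t) - Pint t) 0 rho); try lra.
  intros t Ht. pose proof (V_pos (P t) (inv_series_bounds t Ht)).
  replace 0 with (V (P t) / t * (P t / V (P t)) - P t / t) by (field; lra).
  apply (is_derive_minus (fun t => G (P t)) Pint).
  - apply (is_derive_comp G P); [apply G_deriv, inv_series_bounds, Ht|].
    now apply is_derive_inv_series.
  - now apply is_derive_Pint.
Qed.

Definition psd_scale : R := exp (- F_inv_const).
Definition psd_radius : R := rho * exp F_inv_const.

(* [omega y = exp (G (P (psd_scale * y))) = exp G_inv_const * exp (Pint (psd_scale * y))]. *)
Definition psd_coef (n : nat) : R :=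
  exp G_inv_const * (PS_comp exp_coef (PS_Int (PS_decr_1 g)) n * psd_scale ^ n).

Lemma psd_radius_pos : 0 < psd_radius.
Proof. pose proof rho_pos. unfold psd_radius. pose proof (exp_pos F_inv_const). nra. Qed.

Lemma psd_scale_bounds (y : R) : 0 < y < psd_radius -> 0 < psd_scale * y < rho.
Proof.
  intro Hy. unfold psd_radius, psd_scale in *. rewrite exp_Ropp.
  pose proof (exp_pos F_inv_const).
  split; [apply Rmult_lt_0_compat; [now apply Rinv_0_lt_compat|lra]|].
  apply (Rmult_lt_reg_l (exp F_inv_const)); [lra|].
  rewrite <- Rmult_assoc, Rinv_r by lra. lra.
Qed.

Lemma exp_F_inv_series (y : R) :
  0 < y < psd_radius -> exp (F (P (psd_scale * y))) = y.
Proof.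
  intro Hy. pose proof (psd_scale_bounds y Hy).
  rewrite F_inv_series, exp_plus, exp_ln by lra.
  unfold psd_scale. rewrite exp_Ropp. field. apply Rgt_not_eq, exp_pos.
Qed.

Lemma PS_Int_inv_coef_nonneg (n : nat) : 0 <= PS_Int (PS_decr_1 g) n.
Proof.
  destruct n as [|n]; unfold PS_Int; [lra|].
  apply Rdiv_le_0_compat; [apply inv_coef_nonneg, a_nonneg|apply lt_0_INR; lia].
Qed.

Lemma psd_coef_nonneg (n : nat) : 0 <= psd_coef n.
Proof.
  unfold psd_coef. apply Rmult_le_pos; [apply Rlt_le, exp_pos|].
  apply Rmult_le_pos.
  - apply PS_comp_nonneg; [apply exp_coef_nonneg|apply PS_Int_inv_coef_nonneg].
  - apply pow_le, Rlt_le, exp_pos.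
Qed.

Lemma is_pseries_psd_coef (y : R) :
  0 < y < psd_radius -> is_pseries psd_coef y (exp (G_inv_const + Pint (psd_scale * y))).
Proof.
  intro Hy. pose proof (psd_scale_bounds y Hy). pose proof rho_pos.
  rewrite exp_plus. apply is_pseries_scal_arg.
  apply (is_pseries_PS_comp _ _ _ (Pint (psd_scale * y))).
  - apply exp_coef_nonneg.
  - apply PS_Int_inv_coef_nonneg.
  - reflexivity.
  - lra.
  - apply PSeries_correct, CV_radius_inside.
    rewrite CV_radius_Int, CV_radius_decr_1. apply CV_radius_inv_coef. lra.
  - apply is_exp_Reals.
Qed.

Lemma psd_mean_psd_coef (y : R) :
  0 < y < psd_radius -> psd_mean psd_coef y = P (psd_scale * y).
Proof.
  intro Hy. assert (Hs := psd_scale_bounds y Hy).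
  set (E := fun t => exp (G_inv_const + Pint (psd_scale * t))).
  assert (HE : forall t, 0 < t < psd_radius -> PSeries psd_coef t = E t)
    by (intros; now apply is_pseries_unique, is_pseries_psd_coef).
  assert (HdR := is_derive_Pint (psd_scale * y) Hs).
  assert (HdE : is_derive (PSeries psd_coef) y
                  (E y * (psd_scale * (P (psd_scale * y) / (psd_scale * y))))).
  { apply (is_derive_ext_loc E (PSeries psd_coef) y).
    - apply (locally_interval _ y 0 psd_radius); simpl; try lra.
      intros t Ht0 Ht1. symmetry. apply HE. simpl in *. lra.
    - unfold E. auto_derive.
      + eexists. exact HdR.
      + change (fun x => Pint x) with Pint. rewrite (is_derive_unique _ _ _ HdR). ring. }
  unfold psd_mean. rewrite (is_derive_unique _ _ _ HdE), HE by exact Hy.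
  assert (E y <> 0) by apply Rgt_not_eq, exp_pos.
  assert (psd_scale <> 0) by apply Rgt_not_eq, exp_pos.
  field. lra.
Qed.

Lemma F_increasing (x y : R) : 0 < x -> x < y -> y < Rad -> F x < F y.
Proof.
  intros Hx Hxy Hy.
  destruct (MVT_is_derive F (fun t => 1 / (t * (1 + t * U t))) x y Hxy) as [c [Hc Hmvt]].
  - intros t Ht. apply F_deriv. lra.
  - assert (0 < 1 / (c * (1 + c * U c))) by (apply Rdiv_lt_0_compat, V_pos; lra). nra.
Qed.

Lemma inv_series_exp_F (x : R) :
  0 < x < Rad -> exp (F x) < psd_radius -> P (psd_scale * exp (F x)) = x.
Proof.
  intros Hx Hex. set (y := exp (F x)).
  assert (Hy : 0 < y < psd_radius) by (split; [apply exp_pos|exact Hex]).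
  assert (HPy := inv_series_bounds _ (psd_scale_bounds y Hy)).
  assert (HF : F (P (psd_scale * y)) = F x) by (apply exp_inv; now rewrite exp_F_inv_series).
  destruct (Rtotal_order (P (psd_scale * y)) x) as [Hlt|[Heq|Hlt]]; [|exact Heq|].
  - pose proof (F_increasing _ _ (proj1 HPy) Hlt (proj2 Hx)). lra.
  - pose proof (F_increasing _ _ (proj1 Hx) Hlt (proj2 HPy)). lra.
Qed.

(* [exp o F] maps a neighbourhood of a mean value into parameters and inverts
   the mean there, so it agrees with any inverse [f] of the mean. *)
Lemma exp_F_eq_inverse_near (f : R -> R) (y : R) :
  (forall y, 0 < y < psd_radius -> f (psd_mean psd_coef y) = y) ->
  0 < y < psd_radius -> locally (P (psd_scale * y)) (fun x => exp (F x) = f x).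
Proof.
  intros Hf Hy. set (x0 := P (psd_scale * y)).
  assert (Hx0 : 0 < x0 < Rad) by apply inv_series_bounds, psd_scale_bounds, Hy.
  assert (Hnear : locally x0 (fun x => 0 < x < Rad /\ 0 < exp (F x) < psd_radius)).
  { apply filter_and.
    - apply (locally_interval _ x0 0 Rad); simpl; try lra. intros; simpl in *; lra.
    - assert (HexpF : ex_derive (fun x => exp (F x)) x0).
      { exists (1 / V x0 * exp (F x0)).
        apply (is_derive_comp exp F x0 _ _ (is_derive_exp _)). now apply F_deriv. }
      apply (ex_derive_continuous _ _ HexpF (fun z => 0 < z < psd_radius)).
      unfold x0. rewrite exp_F_inv_series by exact Hy.
      apply (locally_interval _ y 0 psd_radius); simpl; try lra. intros; simpl in *; lra. }
  revert Hnear. apply filter_imp. intros x [Hx Hex].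
  rewrite <- (Hf (exp (F x)) Hex), psd_mean_psd_coef, inv_series_exp_F; auto; lra.
Qed.

Lemma psd_covariance_V : psd_covariance psd_coef psd_radius V.
Proof.
  intros f Hf y Hy. rewrite psd_mean_psd_coef by exact Hy.
  set (x0 := P (psd_scale * y)).
  assert (Hx0 : 0 < x0 < Rad) by apply inv_series_bounds, psd_scale_bounds, Hy.
  assert (Hloc := exp_F_eq_inverse_near f y Hf Hy). fold x0 in Hloc.
  assert (Hdf : is_derive f x0 (1 / V x0 * exp (F x0))).
  { apply (is_derive_ext_loc _ _ _ _ Hloc).
    apply (is_derive_comp exp F x0 _ _ (is_derive_exp _)). now apply F_deriv. }
  split; [eexists; exact Hdf|].
  rewrite (is_derive_unique _ _ _ Hdf), <- (locally_singleton _ _ Hloc).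
  pose proof (V_pos x0 Hx0). pose proof (exp_pos (F x0)). field. lra.
Qed.

End Inversion.

Theorem theorem3 (Rad : R) (a : nat -> R) (U F G omega : R -> R) :
  0 < Rad ->
  (forall k, 0 <= a k) ->
  (forall x, 0 < x < Rad -> is_pseries a x (U x)) ->
  (forall z, 0 < z < Rad ->
     is_derive F z (1 / (z * (1 + z * U z)))) ->
  (forall z, 0 < z < Rad ->
     is_derive G z (z / (z * (1 + z * U z)))) ->
  (forall z, 0 < z < Rad -> omega (exp (F z)) = exp (G z)) ->
  exists (c : nat -> R) (rho : R),
    0 < rho /\
    (forall k, 0 <= c k) /\
    (forall y, 0 < y < rho ->
       (exists z, 0 < z < Rad /\ exp (F z) = y) /\ is_pseries c y (omega y)) /\
    psd_covariance c rho (fun x => x * (1 + x * U x)).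
Proof.
  intros HRad Ha HU HF HG Homega.
  assert (Hr : 0 < Rad / 2 < Rad) by lra.
  set (r := Rad / 2) in Hr.
  exists (psd_coef a U r F G), (psd_radius a U r F).
  split; [eapply psd_radius_pos; eauto|].
  split; [intro k; now apply psd_coef_nonneg|].
  split; [|eapply psd_covariance_V; eauto].
  intros y Hy.
  set (z := PSeries (inv_coef a) (psd_scale a U r F * y)).
  assert (Hz : 0 < z < Rad) by (eapply inv_series_bounds, psd_scale_bounds; eauto).
  assert (HFz : exp (F z) = y) by (eapply exp_F_inv_series; eauto).
  split; [now exists z|].
  replace (omega y) with (exp (G z)) by (rewrite <- HFz; symmetry; now apply Homega).
  unfold z. rewrite (G_inv_series Rad a U Ha HU r Hr G HG) by (eapply psd_scale_bounds; eauto).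
  eapply is_pseries_psd_coef; eauto.
Qed.
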